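(* Let $k\ge 2$, let $B=M\cup\{\omega_1,\ldots,\omega_p\}$ with $p\ge 1$ and $\omega_1,\ldots,\omega_p\in P_k\setminus M$, and let $F$ be a finite system of functions from $P_k(n)$. Then $$I_B(F)\le\left\lceil \log_{u(B)}\bigl(d(F)+1\bigr)\right\rceil .$$
   Context: Let $k\ge 2$ be an integer and $E_k=\{0,1,\ldots,k-1\}$. $P_k(n)$ denotes the set of all functions $E_k^n\to E_k$, and $P_k=\bigcup_n P_k(n)$. Tuples in $E_k^n$ are ordered componentwise: $\tilde\alpha\le\tilde\beta$ iff $\alpha_j\le\beta_j$ for all $j$. A function $f$ is monotone if $\tilde\alpha\le\tilde\beta$ implies $f(\tilde\alpha)\le f(\tilde\beta)$; $M$ is the set of all monotone functions in $P_k$ (of all arities, including constants). A basis is a set $B=M\cup\{\omega_1,\ldots,\omega_p\}$ with $p\ge1$ and $\omega_i\in P_k\setminus M$. A circuit over $B$ with inputs $x_1,\ldots,x_n$ is a finite directed acyclic graph whose source nodes are labelled by the variables $x_1,\ldots,x_n$ and each of whose other nodes (gates) is labelled by a $q$-ary function from $B$ and has $q$ ordered incoming edges; each node computes a function of $P_k(n)$ in the obvious way. A circuit realizes a system $F$ of functions of $x_1,\ldots,x_n$ if every function of $F$ is computed at some node. Gates labelled by functions of $M$ have weight $0$, gates labelled by some $\omega_i$ have weight $1$. The non-monotone complexity $I_B(S)$ of a circuit $S$ is the sum of the weights of its gates; $I_B(F)$ is the minimum of $I_B(S)$ over all circuits $S$ over $B$ realizing $F$. A chain is a sequence $\tilde\alpha_1,\ldots,\tilde\alpha_r$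 of pairwise distinct tuples of $E_k^n$ with $\tilde\alpha_i\le\tilde\alpha_{i+1}$ for $i=1,\ldots,r-1$. A pair $(\tilde\alpha,\tilde\beta)$ with $\tilde\alpha\le\tilde\beta$ is a jump for a system $F$ if $f(\tilde\alpha)>f(\tilde\beta)$ for at least one $f\in F$. For a chain $C=(\tilde\alpha_1,\ldots,\tilde\alpha_r)$, the decrease $d_C(F)$ is the number of $i\in\{1,\ldots,r-1\}$ such that $(\tilde\alpha_i,\tilde\alpha_{i+1})$ is a jump for $F$. The decrease $d(F)$ is the maximum of $d_C(F)$ over all chains $C$ in $E_k^n$. For $f\in P_k(n)$ and a chain $C=(\tilde\alpha_1,\ldots,\tilde\alpha_r)$ in $E_k^n$, $u_C(f)$ is the maximum length $t$ of a subsequence $\tilde\beta_1,\ldots,\tilde\beta_t$ of $C$ (taken in the order of $C$) with $f(\tilde\beta_1)>f(\tilde\beta_2)>\cdots>f(\tilde\beta_t)$. The inversion power $u(f)$ is the maximum of $u_C(f)$ over all chains $C$ in $E_k^n$, and the inversion power of the basis is $u(B)=\max\{u(f): f\in B\}$ (note $u(B)\ge 2$ since $B$ contains a non-monotone function). *)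

From HB Require Import structures.
From mathcomp Require Import all_boot.
From Stdlib Require List.

Set Implicit Arguments.
Unset Strict Implicit.
Unset Printing Implicit Defensive.

(* E_k = 'I_k ;  E_k^n = tup k n ;  P_k(n) = fn k n ;  P_k = Pk k *)
Definition tup (k n : nat) := {ffun 'I_n -> 'I_k}.
Definition fn (k n : nat) := tup k n -> 'I_k.
Definition Pk (k : nat) := {q : nat & fn k q}.

Definition tle (k n : nat) (a b : tup k n) : bool := [forall j, a j <= b j].

Definition monotoneb (k n : nat) (f : fn k n) : bool :=
  [forall a : tup k n, forall b : tup k n, tle a b ==> (f a <= f b)].

Definition inB (k : nat) (omegas : seq (Pk k)) (f : Pk k) : Prop :=
  monotoneb (projT2 f) \/ Stdlib.Lists.List.In f omegas.

(* A circuit is given in topological order: nodes 'I_n are the inputs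
   x_1..x_n, then each gate adds one node; a gate on a circuit with m nodes
   has a label (a function of some arity q) and q ordered incoming edges
   from earlier nodes. *)
Record gate (k m : nat) := Gate {
  garity : nat;
  gfun : fn k garity;
  gins : 'I_garity -> 'I_m }.

Inductive circuit (k n : nat) : nat -> Type :=
| CInputs : circuit k n n
| CGate (m : nat) : circuit k n m -> gate k m -> circuit k n m.+1.

Arguments CInputs {k n}.

Fixpoint cval (k n m : nat) (C : circuit k n m) (x : tup k n) : {ffun 'I_m -> 'I_k} :=
  match C in circuit _ _ m0 return {ffun 'I_m0 -> 'I_k} with
  | CInputs => x
  | @CGate _ _ m' C' g =>
      let v := cval C' x in
      [ffun i : 'I_m'.+1 =>
        match unlift ord_max i with
        | Some j => v j
        | None => (@gfun k m' g) [ffun j => v (@gins k m' g j)]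
        end]
  end.

Fixpoint cvalid (k n m : nat) (omegas : seq (Pk k)) (C : circuit k n m) : Prop :=
  match C with
  | CInputs => True
  | @CGate _ _ m' C' g => cvalid omegas C' /\ inB omegas (existT _ (@garity k m' g) (@gfun k m' g))
  end.

Fixpoint cweight (k n m : nat) (C : circuit k n m) : nat :=
  match C with
  | CInputs => 0
  | @CGate _ _ m' C' g => cweight C' + (~~ monotoneb (@gfun k m' g))
  end.

Definition realizes (k n m : nat) (C : circuit k n m) (F : seq (fn k n)) : Prop :=
  forall f, Stdlib.Lists.List.In f F -> exists i : 'I_m, forall x, cval C x i = f x.

(* I_B(F) <= c  (I_B(F) is the minimum complexity of a circuit over B
   realizing F) *)
Definition IB_le (k n : nat) (omegas : seq (Pk k)) (F : seq (fn k n)) (c : nat) : Prop :=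
  exists (m : nat) (C : circuit k n m),
    [/\ cvalid omegas C, realizes C F & cweight C <= c].

Definition is_max (P : nat -> Prop) (v : nat) : Prop :=
  P v /\ forall w, P w -> w <= v.

Definition chain (k n : nat) (s : seq (tup k n)) : bool :=
  uniq s && sorted (@tle k n) s.

Definition jump (k n : nat) (F : seq (fn k n)) (a b : tup k n) : bool :=
  tle a b && has (fun f : fn k n => f b < f a) F.

Definition dC (k n : nat) (F : seq (fn k n)) (s : seq (tup k n)) : nat :=
  count (fun p => jump F p.1 p.2) (zip s (behead s)).

Definition is_decrease (k n : nat) (F : seq (fn k n)) (d : nat) : Prop :=
  is_max (fun t => exists s, chain s /\ t = dC F s) d.

(* u_C(f): longest subsequence (mask) of C on which f strictly decreases *)
Definition uC (k n : nat) (f : fn k n) (s : seq (tup k n)) : nat :=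
  \max_(b : (size s).-tuple bool | sorted (fun x y => f y < f x) (mask b s))
     size (mask b s).

Definition is_inv_power (k n : nat) (f : fn k n) (v : nat) : Prop :=
  is_max (fun t => exists s, chain s /\ t = uC f s) v.

Definition is_inv_power_basis (k : nat) (omegas : seq (Pk k)) (v : nat) : Prop :=
  is_max (fun t => exists f : Pk k, inB omegas f /\ is_inv_power (projT2 f) t) v.

From HB Require Import structures.
From mathcomp Require Import all_boot zify boolp.

Set Implicit Arguments.
Unset Strict Implicit.
Unset Printing Implicit Defensive.

(* Let D x be d minus the largest decrease of a chain starting at x: D is
   monotone, takes values in [0, d] and strictly increases along every jump.
   A function that is monotone with respect to the vector of node values of a
   circuit can be added by a single monotone gate.  Feeding the chain
   a_0 < ... < a_(u-1), on which some omega strictly decreases, into an omega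
   gate computes u - 1 minus one base-u digit of D at the price of one gate;
   doing this for the e = ceil(log_u (d+1)) digits of D from the top down makes
   the order of node values reverse D.  Then x <= y in node values forces
   D y <= D x, so (x, y) is no jump of F: every f in F is monotone in the node
   values and comes for free. *)

Lemma tle_refl k n : reflexive (@tle k n).
Proof. by move=> a; apply/forallP. Qed.

Lemma tle_trans k n : transitive (@tle k n).
Proof.
move=> b a c /forallP ab /forallP bc; apply/forallP => j.
exact: leq_trans (ab j) (bc j).
Qed.

Lemma tle_anti k n (a b : tup k n) : tle a b -> tle b a -> a = b.
Proof.
move=> /forallP ab /forallP ba; apply/ffunP => j; apply/val_inj/eqP.
by rewrite eqn_leq ab ba.
Qed.

Section Circuits.
Variables k n : nat.

Definition cmonotone m (C : circuit k n m) (t : tup k n -> nat) :=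
  forall x y, tle (cval C x) (cval C y) -> t x <= t y.

Definition cprefix m m' (C : circuit k n m) (C' : circuit k n m') :=
  m <= m' /\ forall x (i : 'I_m) (j : 'I_m'), j = i :> nat -> cval C' x j = cval C x i.

Lemma cprefix_refl m (C : circuit k n m) : cprefix C C.
Proof. by split=> // x i j /val_inj ->. Qed.

Lemma cprefix_trans m1 m2 m3 (C1 : circuit k n m1) (C2 : circuit k n m2)
    (C3 : circuit k n m3) :
  cprefix C1 C2 -> cprefix C2 C3 -> cprefix C1 C3.
Proof.
move=> [le12 E12] [le23 E23]; split; first exact: leq_trans le12 le23.
move=> x i j ji; rewrite (E23 x (widen_ord le12 i)) //; exact: E12.
Qed.

Lemma cprefix_gate m (C : circuit k n m) g : cprefix C (CGate C g).
Proof.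
split=> // x i j ji.
have -> : j = lift ord_max i by apply: val_inj; rewrite /= ji /bump leqNgt ltn_ord.
by rewrite /= ffunE liftK.
Qed.

Lemma cprefix_inputs m (C : circuit k n m) : cprefix CInputs C.
Proof.
elim: C => [|m' C IH g]; first exact: cprefix_refl.
exact: cprefix_trans IH (cprefix_gate C g).
Qed.

Lemma cval_gate_last m (C : circuit k n m) g x :
  cval (CGate C g) x ord_max = @gfun k m g [ffun j => cval C x (@gins k m g j)].
Proof. by rewrite /= ffunE unlift_none. Qed.

Lemma tle_cval_prefix m m' (C : circuit k n m) (C' : circuit k n m') x y :
  cprefix C C' -> tle (cval C' x) (cval C' y) -> tle (cval C x) (cval C y).
Proof.
move=> [le E] /forallP H; apply/forallP => i.
by have := H (widen_ord le i); rewrite !(E _ i).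
Qed.

Lemma tle_cval_inputs m (C : circuit k n m) x y :
  tle (cval C x) (cval C y) -> tle x y.
Proof. exact: tle_cval_prefix (cprefix_inputs C). Qed.

Lemma cmonotone_prefix m m' (C : circuit k n m) (C' : circuit k n m') t :
  cprefix C C' -> cmonotone C t -> cmonotone C' t.
Proof. by move=> pre H x y /(tle_cval_prefix pre); apply: H. Qed.

End Circuits.

Section MonotoneGates.
Variables k' n : nat.
Local Notation k := k'.+1.
Variable omegas : seq (Pk k).

(* Relative monotonicity of f is exactly what makes the monotone function
   G z = max {f x | cval C x <= z} agree with f on the node values of C. *)
Lemma add_monotone_gate m (C : circuit k n m) (f : fn k n) :
  cvalid omegas C -> cmonotone C (fun x => f x) ->
  exists C' : circuit k n m.+1,
    [/\ cvalid omegas C', cweight C' = cweight C, cprefix C C' &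
        forall x, cval C' x ord_max = f x].
Proof.
move=> VC monoC.
pose G : fn k m := fun z => inord (\max_(x | tle (cval C x) z) f x).
have GE z : G z = \max_(x | tle (cval C x) z) f x :> nat.
  by rewrite inordK // ltnS; apply/bigmax_leqP => x _; rewrite -ltnS.
have monoG : monotoneb G.
  apply/forallP => a; apply/forallP => b; apply/implyP => ab.
  rewrite !GE; apply/bigmax_leqP => x xa.
  by apply: leq_bigmax_cond; apply: tle_trans xa ab.
have Gf y : G (cval C y) = f y.
  apply/val_inj/eqP; rewrite /= GE eqn_leq; apply/andP; split.
    by apply/bigmax_leqP => x /monoC.
  by apply: leq_bigmax_cond; apply: tle_refl.
exists (CGate C (@Gate k m m G id)); split.
- by split => //; left.
- by rewrite /= monoG addn0.
- exact: cprefix_gate.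
- by move=> x; rewrite cval_gate_last -[X in G X = _]/[ffun j => cval C x j] ffunK Gf.
Qed.

Lemma add_monotone_gates q (hs : 'I_q -> fn k n) m (C : circuit k n m) :
  cvalid omegas C -> (forall c, cmonotone C (fun x => hs c x)) ->
  exists m' (C' : circuit k n m') (pos : 'I_q -> 'I_m'),
    [/\ cvalid omegas C', cweight C' = cweight C, cprefix C C' &
        forall c x, cval C' x (pos c) = hs c x].
Proof.
elim: q hs => [|q IH] hs VC monoC.
  have pos : 'I_0 -> 'I_m by case.
  by exists m, C, pos; split => //; [exact: cprefix_refl | case].
have [m1 [C1 [pos1 [V1 W1 P1 E1]]]] := IH (fun c => hs (lift ord_max c)) VC (fun c => monoC _).
have [C2 [V2 W2 P2 E2]] :=
  add_monotone_gate V1 (cmonotone_prefix P1 (monoC ord_max)).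
pose pos2 (c : 'I_q.+1) : 'I_m1.+1 :=
  if unlift ord_max c is Some c' then lift ord_max (pos1 c') else ord_max.
exists m1.+1, C2, pos2; split; [exact: V2 | by rewrite W2 W1 | |].
  exact: cprefix_trans P1 P2.
move=> c x; rewrite /pos2; case: unliftP => [c' ->|->]; last by rewrite E2.
by rewrite -E1; case: P2 => _ P2; apply: P2; rewrite lift_max.
Qed.

Lemma add_monotone_outputs (l : seq (fn k n)) m (C : circuit k n m) :
  cvalid omegas C ->
  (forall f, Stdlib.Lists.List.In f l -> cmonotone C (fun x => f x)) ->
  exists m' (C' : circuit k n m'),
    [/\ cvalid omegas C', cweight C' = cweight C, cprefix C C' & realizes C' l].
Proof.
elim: l m C => [|f l IH] m C VC monoC.
  by exists m, C; split => //; apply: cprefix_refl.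
have [m1 [C1 [V1 W1 P1 R1]]] := IH m C VC (fun g gl => monoC g (or_intror gl)).
have [C2 [V2 W2 P2 E2]] :=
  add_monotone_gate V1 (cmonotone_prefix P1 (monoC f (or_introl erefl))).
exists m1.+1, C2; split => //; [by rewrite W2 W1 | exact: cprefix_trans P1 P2 |].
move=> g [<-|gl]; first by exists ord_max.
have [i Ei] := R1 g gl; exists (widen_ord (leqnSn _) i) => x.
by case: P2 => _ P2; rewrite (P2 x i) ?Ei.
Qed.

End MonotoneGates.

Lemma size_sorted_decreasing k q (w : fn k q) (a : seq (tup k q)) :
  sorted (fun x y => w y < w x) a -> size a <= k.
Proof.
move=> decr; rewrite -(size_map w).
have uniq_wa : uniq (map w a).
  apply: (@sorted_uniq _ (fun x y : 'I_k => y < x)); last by rewrite sorted_map.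
  - by move=> y x z /= yx zy; apply: ltn_trans zy yx.
  - by move=> x /=; rewrite ltnn.
have := uniq_leq_size uniq_wa (fun x _ => mem_enum 'I_k x).
by rewrite size_enum_ord.
Qed.

Lemma uC_le k q (w : fn k q) s : uC w s <= k.
Proof. by apply/bigmax_leqP => b; apply: size_sorted_decreasing. Qed.

Section OmegaGadget.
Variables k' n : nat.
Local Notation k := k'.+1.
Variables (omegas : seq (Pk k)) (q : nat) (w : fn k q) (a : seq (tup k q)).
Hypothesis w_in_basis : inB omegas (existT _ q w).
Hypothesis a_increasing : sorted (@tle k q) a.
Hypothesis a_w_decreasing : sorted (fun x y => w y < w x) a.

(* Feed the point nth a (t x) of the chain into the gate w: the result
   decreases with t, so (size a).-1 - t x is monotone in the new node. *)
Lemma add_omega_gadget m (C : circuit k n m) (t : tup k n -> nat) :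
  cvalid omegas C -> (forall x, t x < size a) -> cmonotone C t ->
  exists m' (C' : circuit k n m') (i : 'I_m'),
   [/\ cvalid omegas C', cweight C' <= (cweight C).+1, cprefix C C' &
       forall x, cval C' x i = (size a).-1 - t x :> nat].
Proof.
move=> VC t_lt monoC.
pose a0 : tup k q := [ffun => ord0].
pose hs (c : 'I_q) : fn k n := fun x => nth a0 a (t x) c.
have monoh c : cmonotone C (fun x => hs c x).
  move=> x y /monoC txy.
  have := sorted_leq_nth (@tle_trans _ _) (@tle_refl _ _) a0 a_increasing _ _
    (t_lt x) (t_lt y) txy.
  by move/forallP => /(_ c).
have [m1 [C1 [pos [V1 W1 P1 E1]]]] := add_monotone_gates VC monoh.
pose C2 := CGate C1 (@Gate k m1 q w pos).
have E2 x : cval C2 x ord_max = w (nth a0 a (t x)).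
  by rewrite cval_gate_last; congr w; apply/ffunP => j; rewrite ffunE E1.
have size_a : size a <= k := size_sorted_decreasing a_w_decreasing.
have rev_lt x : (size a).-1 - t x < k.
  by apply: leq_ltn_trans (leq_subr _ _) _; have := t_lt x; lia.
have mono2 : cmonotone C2 (fun x => @inord k' ((size a).-1 - t x)).
  move=> x y H; rewrite !inordK //.
  have := forallP H ord_max; rewrite !E2 => wxy.
  apply: leq_sub2l; rewrite leqNgt; apply/negP => txy.
  have := sorted_ltn_nth (fun _ _ _ h1 h2 => ltn_trans h2 h1)
    a0 a_w_decreasing _ _ (t_lt x) (t_lt y) txy.
  by rewrite /= ltnNge wxy.
have [C3 [V3 W3 P3 E3]] := add_monotone_gate (conj V1 w_in_basis : cvalid omegas C2) mono2.
exists m1.+2, C3, ord_max; split.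
- exact: V3.
- by rewrite W3 /= W1; case: (~~ _); rewrite ?addn1 ?addn0.
- exact: cprefix_trans (cprefix_trans P1 (cprefix_gate C1 _)) P3.
- by move=> x; rewrite E3 inordK.
Qed.

End OmegaGadget.

Lemma jump_neq k n (F : seq (fn k n)) x y : jump F x y -> x != y.
Proof.
case/andP=> _; apply: contraTneq => <-.
by apply/hasPn => f _; rewrite ltnn.
Qed.

Lemma has_In T (l : seq T) (p : pred T) x : Stdlib.Lists.List.In x l -> p x -> has p l.
Proof. by elim: l => //= y l IH [<- ->|/IH px /px ->]; rewrite ?orbT. Qed.

Section Potential.
Variables (k n : nat) (F : seq (fn k n)) (d : nat).
Hypothesis decrease_d : is_decrease F d.

Definition chain_from_decrease x c :=
  exists s, chain (x :: s) /\ dC F (x :: s) = c.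

Definition tail_decrease x : nat :=
  \max_(c < d.+1 | `[< chain_from_decrease x c >]) c.

Lemma tail_decrease_le x : tail_decrease x <= d.
Proof. by apply/bigmax_leqP => c _; rewrite -ltnS. Qed.

Lemma tail_decrease_ge x c : chain_from_decrease x c -> c <= tail_decrease x.
Proof.
move=> xc; have cd : c < d.+1.
  by case: xc => s [chs <-]; rewrite ltnS; apply: decrease_d.2; exists (x :: s).
exact: (@leq_bigmax_cond _ _ _ (Ordinal cd) (asboolT xc)).
Qed.

Lemma tail_decrease_attained x : chain_from_decrease x (tail_decrease x).
Proof.
have x0 : chain_from_decrease x 0 by exists [::].
pose A := [pred c : 'I_d.+1 | `[< chain_from_decrease x c >]].
have A0 : 0 < #|A| by apply/card_gt0P; exists ord0; apply: asboolT.
have [c /asboolP xc max_c] := eq_bigmax_cond val A0.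
by rewrite /tail_decrease max_c.
Qed.

Lemma tail_decrease_step x y : tle x y -> x != y ->
  tail_decrease y + jump F x y <= tail_decrease x.
Proof.
move=> xy neq_xy; have [s [/andP [uniq_ys sorted_ys] <-]] := tail_decrease_attained y.
apply: tail_decrease_ge; exists (y :: s); split; last by rewrite /dC /= addnC.
apply/andP; split; last by rewrite /= xy.
rewrite cons_uniq uniq_ys andbT; apply: contra neq_xy => xs.
have /allP/(_ x xs) yx : all (tle y) (y :: s).
  by rewrite /= tle_refl (order_path_min (@tle_trans _ _) sorted_ys).
by apply/eqP/tle_anti.
Qed.

Definition potential x := d - tail_decrease x.

Lemma potential_mono x y : tle x y -> potential x <= potential y.
Proof.
move=> xy; case: (eqVneq x y) => [->//|neq_xy].
by have := tail_decrease_step xy neq_xy; rewrite /potential; lia.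
Qed.

Lemma potential_jump x y : jump F x y -> potential x < potential y.
Proof.
move=> J; have xy : tle x y by case/andP: J.
have := tail_decrease_step xy (jump_neq J); rewrite J /potential.
by have := tail_decrease_le x; lia.
Qed.

Lemma potential_le x : potential x <= d.
Proof. exact: leq_subr. Qed.

End Potential.

Lemma exists_is_max (P : nat -> Prop) b :
  (exists a, P a) -> (forall v, P v -> v <= b) -> exists v, is_max P v.
Proof.
elim: b => [|b IH] [a Pa] le_b.
  by exists a; split => // v /le_b; have := le_b a Pa; lia.
have [Pb1|nPb1] := pselect (P b.+1); first by exists b.+1.
apply: IH; first by exists a.
by move=> v Pv; have := le_b v Pv; rewrite leq_eqVlt => /predU1P [vb|//]; subst v.
Qed.

Section InversionPower.
Variables (k q : nat) (w : fn k q).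

Lemma exists_inv_power : exists v, is_inv_power w v.
Proof.
apply: (exists_is_max (b := k)); first by exists (uC w [::]), [::].
by move=> v [s [_ ->]]; apply: uC_le.
Qed.

Lemma inv_power_nonmonotone v : ~~ monotoneb w -> is_inv_power w v -> 1 < v.
Proof.
case/forallPn => a /forallPn [b]; rewrite negb_imply => /andP [ab wba] [_ max_v].
have neq_ab : a != b by apply: contraTneq wba => ->; rewrite leqnn.
apply: leq_trans (max_v _ (ex_intro _ [:: a; b] (conj _ erefl))).
  have := @leq_bigmax_cond _ (fun bb : 2.-tuple bool =>
    sorted (fun x y => w y < w x) (mask bb [:: a; b])) (fun bb => size (mask bb [:: a; b]))
    [tuple true; true].
  by rewrite /= ltnNge wba => /(_ erefl).
by rewrite /chain /= inE neq_ab ab.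
Qed.

Lemma inv_power_witness v : is_inv_power w v ->
  exists a, [/\ sorted (@tle k q) a, sorted (fun x y => w y < w x) a & size a = v].
Proof.
case=> [[s [/andP [_ sorted_s] ->]] _].
pose A := [pred bb : (size s).-tuple bool | sorted (fun x y => w y < w x) (mask bb s)].
have A0 : 0 < #|A|.
  by apply/card_gt0P; exists [tuple of nseq (size s) false]; rewrite inE /= mask_false.
have [bb decr max_bb] := eq_bigmax_cond (fun bb : (size s).-tuple bool => size (mask bb s)) A0.
exists (mask bb s); split; [exact: sorted_mask (@tle_trans _ _) _ _ sorted_s | exact: decr |].
by rewrite -max_bb; apply: eq_bigl => b; rewrite inE.
Qed.

End InversionPower.

Lemma inv_power_basis_gt1 k (omegas : seq (Pk k)) u :
  0 < size omegas -> (forall w, Stdlib.Lists.List.In w omegas -> ~~ monotoneb (projT2 w)) ->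
  is_inv_power_basis omegas u -> 1 < u.
Proof.
case: omegas => // w0 om _ nonmono [_ max_u].
have [v vw0] := exists_inv_power (projT2 w0).
apply: leq_trans (inv_power_nonmonotone (nonmono w0 (or_introl erefl)) vw0) _.
by apply: max_u; exists w0; split => //; right; left.
Qed.

Lemma leq_mod_eq_div u A B : A %/ u = B %/ u -> (A <= B) = (A %% u <= B %% u).
Proof. by move=> E; rewrite {1}(divn_eq A u) {1}(divn_eq B u) E leq_add2l. Qed.

Lemma div_expn_eq_div u j A B : A <= B -> B %/ u ^ j.+1 <= A %/ u ^ j.+1 ->
  A %/ u ^ j %/ u = B %/ u ^ j %/ u.
Proof.
move=> AB BA; rewrite -!divnMA -expnSr; apply/eqP; rewrite eqn_leq BA andbT.
exact: leq_div2r.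
Qed.

Section Digits.
Variables k' n : nat.
Local Notation k := k'.+1.
Variables (omegas : seq (Pk k)) (q : nat) (w : fn k q) (a : seq (tup k q)).
Hypothesis w_in_basis : inB omegas (existT _ q w).
Hypothesis a_increasing : sorted (@tle k q) a.
Hypothesis a_w_decreasing : sorted (fun x y => w y < w x) a.
Local Notation u := (size a).
Hypothesis u_gt0 : 0 < u.
Variables (D : tup k n -> nat) (e : nat).
Hypothesis D_mono : forall x y, tle x y -> D x <= D y.
Hypothesis D_lt : forall x, D x < u ^ e.

Definition high_antitone m (C : circuit k n m) j :=
  forall x y, tle (cval C x) (cval C y) -> D y %/ u ^ j <= D x %/ u ^ j.

Lemma high_antitone_step m (C : circuit k n m) j :
  cvalid omegas C -> high_antitone C j.+1 ->
  exists m' (C' : circuit k n m'),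
    [/\ cvalid omegas C', cweight C' <= (cweight C).+1 & high_antitone C' j].
Proof.
move=> VC antiC.
pose t x := D x %/ u ^ j %% u.
have t_lt x : t x < u by rewrite ltn_pmod.
have same_high x y : tle (cval C x) (cval C y) -> D x %/ u ^ j %/ u = D y %/ u ^ j %/ u.
  move=> H; exact: div_expn_eq_div (D_mono (tle_cval_inputs H)) (antiC x y H).
have monoC : cmonotone C t.
  move=> x y H; rewrite /t -leq_mod_eq_div; last exact: same_high.
  exact: leq_div2r (D_mono (tle_cval_inputs H)).
have [m' [C' [i [V' W' P' E']]]] := add_omega_gadget w_in_basis a_increasing a_w_decreasing VC t_lt monoC.
exists m', C'; split => // x y H.
have Hi := forallP H i; rewrite !E' in Hi.
have tyx : t y <= t x by have := t_lt x; have := t_lt y; lia.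
by rewrite (leq_mod_eq_div (esym (same_high x y (tle_cval_prefix P' H)))).
Qed.

Lemma exists_high_antitone i : exists m (C : circuit k n m),
  [/\ cvalid omegas C, cweight C <= i & high_antitone C (e - i)].
Proof.
elim: i => [|i [m [C [VC WC antiC]]]].
  exists n, CInputs; split => // x y _.
  by rewrite subn0 !divn_small.
case: (ltnP i e) => [ie|ei]; last first.
  exists m, C; split => //; first exact: leqW.
  by have -> : e - i.+1 = e - i by lia.
have antiC' : high_antitone C (e - i.+1).+1 by rewrite subnSK.
have [m' [C' [V' W' anti']]] := high_antitone_step VC antiC'.
by exists m', C'; split => //; apply: leq_trans W' _.
Qed.

End Digits.

Theorem theorem2 (k : nat) (hk : 2 <= k)
  (omegas : seq (Pk k)) (hp : 0 < size omegas)
  (hnm : forall w, Stdlib.Lists.List.In w omegas -> ~~ monotoneb (projT2 w))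
  (n : nat) (F : seq (fn k n)) (d u : nat)
  (hd : is_decrease F d) (hu : is_inv_power_basis omegas u) :
  IB_le omegas F (up_log u d.+1).
Proof.
case: k hk omegas hp hnm F hd hu => // k' _ omegas hp hnm F hd hu.
have u_gt1 := inv_power_basis_gt1 hp hnm hu.
have [[[q w] [w_in /inv_power_witness [a [incr decr size_a]]]] _] := hu.
subst u; set e := up_log (size a) d.+1.
have D_lt x : potential F d x < size a ^ e.
  exact: leq_ltn_trans (potential_le F d x) (up_logP _ u_gt1).
have [m [C [VC WC antiC]]] :=
  exists_high_antitone w_in incr decr (ltnW u_gt1) (potential_mono hd) D_lt e.
have monoF f : Stdlib.Lists.List.In f F -> cmonotone C (fun x => f x).
  move=> fF x y H; rewrite leqNgt; apply/negP => fyx.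
  have J : jump F x y.
    by rewrite /jump (tle_cval_inputs H) (has_In (p := fun g : fn _ _ => g y < g x) fF).
  have := antiC x y H; rewrite subnn expn0 !divn1.
  by rewrite leqNgt (potential_jump hd J).
have [m' [C' [V' W' _ R']]] := add_monotone_outputs VC monoF.
by exists m', C'; split => //; rewrite W'.
Qed.
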